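(* Let $(Y,\overline X,x)$ be a point for (BM$_{\mathbf n}$). Suppose either (i) it is 1-critical with a multiplier $\lambda$ (as in the definition of 1-criticality) satisfying $S_j(\lambda)\in\mathbb{S}^{n_j}_+$ for all $j\in[k]$, or (ii) it is 2-critical and $Y_j$ is column rank deficient (i.e. $\operatorname{rank}Y_j<p_j$) for every $j\in[k]$. Then $(Y,\overline X,x)$ is a global minimizer of (BM$_{\mathbf n}$).
   Context: Let $\mathbb{S}^{r}$ denote real symmetric $r\times r$ matrices, $\mathbb{S}^r_+$ the PSD cone, $A\bullet B=\operatorname{trace}(A^TB)$. Let $\mathbf n=(n_1,\dots,n_\ell)$, $d\ge 0$, $1\le k\le \ell$, $\mathbb{S}^{\mathbf n}=\mathbb{S}^{n_1}\times\cdots\times\mathbb{S}^{n_\ell}$, $\mathbb{S}^{\mathbf n}_+=\mathbb{S}^{n_1}_+\times\cdots\times\mathbb{S}^{n_\ell}_+$, with the inner product $\langle\cdot,\cdot\rangle$ on $\mathbb{S}^{\mathbf n}\times\mathbb{R}^d$ being the sum of trace inner products and the dot product. Let $C\in\mathbb{S}^{\mathbf n}\times\mathbb{R}^d$, $b\in\mathbb{R}^m$, and $\mathcal{A}:\mathbb{S}^{\mathbf n}\times\mathbb{R}^d\to\mathbb{R}^m$ linear, written $\mathcal{A}(X_1,\dots,X_\ell,x)=\sum_j\mathcal{A}_j(X_j)+\mathcal{A}_0(x)$ with $\mathcal{A}_j(X_j)=(A_{i,j}\bullet X_j)_{i\in[m]}$, $A_{i,j}\in\mathbb{S}^{n_j}$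 (this formula also defines $\mathcal{A}_j$ on nonsymmetric matrices); $\mathcal{A}^*$ is its adjoint. Let $\mathscr{X}=\{X=(X_1,\dots,X_\ell,x)\in\mathbb{S}^{\mathbf n}_+\times\mathbb{R}^d:\mathcal{A}(X)=b\}$, assumed nonempty, with $\min_{X\in\mathscr{X}}\langle C,X\rangle$ attained. For positive integers $p_1,\dots,p_k$, let $Y=(Y_1,\dots,Y_k)$, $Y_j\in\mathbb{R}^{n_j\times p_j}$, $q(Y)=(Y_1Y_1^T,\dots,Y_kY_k^T)$, $\overline X=(X_{k+1},\dots,X_\ell)$. Problem (BM$_{\mathbf n}$) is $\min_{Y,\overline X,x}\langle C,(q(Y),\overline X,x)\rangle$ subject to $(q(Y),\overline X,x)\in\mathscr{X}$. For $\lambda\in\mathbb{R}^m$ let $S(\lambda)=C-\mathcal{A}^*(\lambda)$ with components $S_j(\lambda)\in\mathbb{S}^{n_j}$ and $s(\lambda)\in\mathbb{R}^d$. A point $(Y,\overline X,x)$ is 1-critical with multiplier $\lambda\in\mathbb{R}^m$ if $(q(Y),\overline X,x)\in\mathscr{X}$, $S_j(\lambda)\in\mathbb{S}^{n_j}_+$ for $j>k$, $\sum_{j>k}S_j(\lambda)\bullet X_j=0$, $s(\lambda)=0$, and $S_j(\lambda)Y_j=0$ for $j\in[k]$; it is 2-critical if moreover, for each $j\in[k]$, $S_j(\lambda)\bullet U_jU_j^T\ge0$ for all $U_j\in\mathbb{R}^{n_j\times p_j}$ with $\mathcal{A}_j(U_jY_j^T)=0$. *)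

From mathcomp Require Import all_boot all_order all_algebra.
Set Implicit Arguments. Unset Strict Implicit. Unset Printing Implicit Defensive.
Import Order.TTheory GRing.Theory Num.Theory.
Local Open Scope ring_scope.

Definition frob (R : rcfType) (r s : nat) (M N : 'M[R]_(r, s)) : R :=
  \tr (M^T *m N).

Definition psd (R : rcfType) (r : nat) (M : 'M[R]_r) : Prop :=
  M^T = M /\ forall v : 'cV[R]_r, 0 <= (v^T *m M *m v) 0 0.

Definition dotv (R : rcfType) (d : nat) (u v : 'rV[R]_d) : R :=
  \sum_(t < d) u 0 t * v 0 t.

Section BM.
Variables (R : rcfType) (l : nat) (n : 'I_l -> nat) (d m k : nat)
  (p : 'I_l -> nat).
(* A_{i,j} blocks, A_0 given by rows a0 i, cost (C_j)_j and c, rhs b *)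
Variables (A : 'I_m -> forall j : 'I_l, 'M[R]_(n j)) (a0 : 'I_m -> 'rV[R]_d)
  (C : forall j : 'I_l, 'M[R]_(n j)) (c : 'rV[R]_d) (b : 'I_m -> R).

Definition opA (X : forall j : 'I_l, 'M[R]_(n j)) (x : 'rV[R]_d) : 'I_m -> R :=
  fun i => \sum_(j < l) frob (A i j) (X j) + dotv (a0 i) x.

Definition obj (X : forall j : 'I_l, 'M[R]_(n j)) (x : 'rV[R]_d) : R :=
  \sum_(j < l) frob (C j) (X j) + dotv c x.

Definition feas (X : forall j : 'I_l, 'M[R]_(n j)) (x : 'rV[R]_d) : Prop :=
  (forall j, psd (X j)) /\ forall i, opA X x i = b i.

(* (q(Y), Xbar): blocks j < k (0-indexed, i.e. j in [k]) are Y_j Y_j^T,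
   the others come from Xbar (the entries Xb j for j < k are ignored). *)
Definition qfull (Y : forall j : 'I_l, 'M[R]_(n j, p j))
  (Xb : forall j : 'I_l, 'M[R]_(n j)) : forall j : 'I_l, 'M[R]_(n j) :=
  fun j => if (j < k)%N then Y j *m (Y j)^T else Xb j.

Definition Slam (lam : 'I_m -> R) (j : 'I_l) : 'M[R]_(n j) :=
  C j - \sum_(i < m) lam i *: A i j.
Definition slam (lam : 'I_m -> R) : 'rV[R]_d :=
  c - \sum_(i < m) lam i *: a0 i.

(* A_j applied to a (possibly nonsymmetric) matrix *)
Definition Aj (j : 'I_l) (M : 'M[R]_(n j)) : 'I_m -> R :=
  fun i => frob (A i j) M.

Definition crit1 (Y : forall j : 'I_l, 'M[R]_(n j, p j))
  (Xb : forall j : 'I_l, 'M[R]_(n j)) (x : 'rV[R]_d) (lam : 'I_m -> R) : Prop :=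
  [/\ feas (qfull Y Xb) x,
      (forall j : 'I_l, (k <= j)%N -> psd (Slam lam j)),
      \sum_(j < l | (k <= j)%N) frob (Slam lam j) (Xb j) = 0,
      slam lam = 0 &
      (forall j : 'I_l, (j < k)%N -> Slam lam j *m Y j = 0)].

Definition crit2 (Y : forall j : 'I_l, 'M[R]_(n j, p j))
  (Xb : forall j : 'I_l, 'M[R]_(n j)) (x : 'rV[R]_d) (lam : 'I_m -> R) : Prop :=
  crit1 Y Xb x lam /\
  forall j : 'I_l, (j < k)%N -> forall U : 'M[R]_(n j, p j),
    (forall i, Aj (U *m (Y j)^T) i = 0) ->
    0 <= frob (Slam lam j) (U *m U^T).

Definition bm_global_min (Y : forall j : 'I_l, 'M[R]_(n j, p j))
  (Xb : forall j : 'I_l, 'M[R]_(n j)) (x : 'rV[R]_d) : Prop :=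
  feas (qfull Y Xb) x /\
  forall (Y' : forall j : 'I_l, 'M[R]_(n j, p j))
         (Xb' : forall j : 'I_l, 'M[R]_(n j)) (x' : 'rV[R]_d),
    feas (qfull Y' Xb') x' -> obj (qfull Y Xb) x <= obj (qfull Y' Xb') x'.

End BM.

(* Weak duality.  For every X in the feasible set,
     <C, X> = sum_j S_j(lam) . X_j + s(lam) . x + lam . b,
   and S . X >= 0 whenever S and X are both PSD: X is a sum of rank-one terms
   u u^T, and S . u u^T = u^T S u.  Hence if S(lam) is PSD and s(lam) = 0, then
   lam . b bounds the objective from below, and 1-criticality makes the bound
   attained at (q(Y), Xbar, x) by complementary slackness (j > k) and
   S_j Y_j = 0 (j <= k).  In case (ii), S_j is PSD for j <= k by the
   second-order condition: rank deficiency gives z <> 0 with Y_j z = 0, and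
   U = v z^T satisfies U Y_j^T = 0 and U U^T = |z|^2 v v^T, so v^T S_j v >= 0. *)

From mathcomp Require Import all_boot all_order all_algebra ring lra.
Set Implicit Arguments. Unset Strict Implicit. Unset Printing Implicit Defensive.
Import Order.TTheory GRing.Theory Num.Theory.
Local Open Scope ring_scope.

Section PsdGram.
Variables (R : rcfType) (n : nat).
Implicit Types (M N S X : 'M[R]_n) (u v w : 'cV[R]_n).

Definition qform M u v : R := (u^T *m M *m v) 0 0.

Lemma qform_tr M u v : qform M^T u v = qform M v u.
Proof. by rewrite /qform -trace_mx11 -mxtrace_tr !trmx_mul !trmxK mulmxA trace_mx11. Qed.

Lemma qform_delta M i j : qform M (delta_mx i 0) (delta_mx j 0) = M i j.
Proof. by rewrite /qform trmx_delta -rowE -colE !mxE. Qed.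

Lemma qform_expand M u v t : M^T = M ->
  qform M (u + t *: v) (u + t *: v) =
  qform M u u + 2 * t * qform M u v + t ^+ 2 * qform M v v.
Proof.
move=> symM; have qvu : qform M v u = qform M u v by rewrite -qform_tr symM.
rewrite /qform [(u + _)^T]linearD /= [(t *: v)^T]linearZ /=.
rewrite !(mulmxDl, mulmxDr) -!(scalemxAl, scalemxAr).
rewrite ![((_ + _ : 'M_1) 0 0)]mxE ![((_ *: _ : 'M_1) 0 0)]mxE.
move: qvu; rewrite /qform => ->; ring.
Qed.

Lemma psd_cauchy_schwarz X u v : psd X ->
  qform X u v ^+ 2 <= qform X u u * qform X v v.
Proof.
case=> symX psdX.
have quad t : 0 <= qform X u u + 2 * t * qform X u v + t ^+ 2 * qform X v v.
  by rewrite -qform_expand //; exact: psdX.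
have c_ge0 : 0 <= qform X v v := psdX v.
move: quad c_ge0; set a := qform X u u; set b := qform X u v; set c := qform X v v.
move=> quad c_ge0; have [c0 | c_neq0] := eqVneq c 0.
  suff -> : b = 0 by rewrite c0 expr0n mulr0.
  apply/eqP; apply: contraTT (quad (- (a + 1) / (2 * b))) => b_neq0.
  have -> : a + 2 * (- (a + 1) / (2 * b)) * b + (- (a + 1) / (2 * b)) ^+ 2 * c = -1.
    by rewrite c0 mulr0 addr0; field.
  by rewrite -ltNge ltrN10.
have c_gt0 : 0 < c by rewrite lt_def c_neq0.
have := quad (- b / c).
have -> : a + 2 * (- b / c) * b + (- b / c) ^+ 2 * c = (a * c - b ^+ 2) / c by field.
by rewrite pmulr_lge0 ?invr_gt0 // subr_ge0.
Qed.

Lemma psd_diag_ge0 X j : psd X -> 0 <= X j j.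
Proof. by move=> pX; rewrite -qform_delta; exact: pX.2. Qed.

Lemma psd_diag0 X : psd X -> (forall j, X j j = 0) -> X = 0.
Proof.
move=> pX X0; apply/matrixP => a b; rewrite mxE; apply/eqP.
have := psd_cauchy_schwarz (delta_mx a 0) (delta_mx b 0) pX.
by rewrite !qform_delta !X0 mulr0 le_eqVlt ltNge sqr_ge0 orbF sqrf_eq0.
Qed.

Lemma qform_gram w u : qform (w *m w^T) u u = (u^T *m w) 0 0 ^+ 2.
Proof.
rewrite /qform mulmxA -(mulmxA _ w^T) -[w^T *m u]trmxK trmx_mul trmxK.
by rewrite mxE big_ord1 [_^T 0 0]mxE expr2.
Qed.

Lemma qformBZ M N a u v : qform (M - a *: N) u v = qform M u v - a * qform N u v.
Proof.
rewrite /qform -!trace_mx11 mulmxBr mulmxBl -scalemxAr -scalemxAl.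
by rewrite mxtraceD -scaleNr mxtraceZ mulNr.
Qed.

(* One step of Cholesky elimination, with pivot [X i i]. *)
Definition deflate X i := X - (X i i)^-1 *: (col i X *m (col i X)^T).

Lemma deflate_diag X i j : deflate X i j j = X j j - (X i i)^-1 * X j i ^+ 2.
Proof. by rewrite !mxE big_ord1 !mxE expr2. Qed.

Lemma deflate_psd X i : psd X -> 0 < X i i -> psd (deflate X i).
Proof.
move=> pX Xii_gt0; have symX := pX.1; split.
  by rewrite /deflate linearB linearZ /= trmx_mul trmxK symX.
move=> u; rewrite -/(qform _ u u) qformBZ qform_gram colE mulmxA subr_ge0.
rewrite -(ler_pM2l Xii_gt0) mulrA mulfV ?gt_eqF // mul1r mulrC -(qform_delta X i i).
exact: psd_cauchy_schwarz.
Qed.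

(* Induction on the number of nonzero diagonal entries, which deflation at a
   positive pivot strictly decreases. *)
Lemma psd_gram X : psd X -> exists us : seq 'cV[R]_n, X = \sum_(u <- us) u *m u^T.
Proof.
have [N] := ubnP #|[set j | X j j != 0]|; elim: N X => // N IH X supp_lt pX.
have [supp0 | [i]] := set_0Vmem [set j | X j j != 0].
  exists [::]; rewrite big_nil; apply: psd_diag0 => // j.
  by apply/eqP/negP => /negP Xjj; have := in_set0 j; rewrite -supp0 inE Xjj.
rewrite inE => Xii_neq0; have Xii_gt0 : 0 < X i i by rewrite lt_def Xii_neq0 psd_diag_ge0.
have supp_proper : [set j | deflate X i j j != 0] \proper [set j | X j j != 0].
  apply/properP; split; last first.
    by exists i; rewrite inE // negbK deflate_diag expr2 mulKf ?subrr.
  apply/subsetP => j; rewrite !inE; apply: contraNN => /eqP Xjj0.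
  have := psd_diag_ge0 j (deflate_psd pX Xii_gt0).
  rewrite eq_le => ->; rewrite andbT deflate_diag Xjj0 sub0r oppr_le0.
  by rewrite mulr_ge0 ?sqr_ge0 // invr_ge0 ltW.
have [us def_us] : exists us : seq 'cV[R]_n, deflate X i = \sum_(u <- us) u *m u^T.
  apply: IH (deflate_psd pX Xii_gt0).
  by apply: leq_trans (proper_card supp_proper) _; rewrite -ltnS.
set u := (Num.sqrt (X i i))^-1 *: col i X.
have uuT : u *m u^T = (X i i)^-1 *: (col i X *m (col i X)^T).
  by rewrite linearZ /= -scalemxAl -scalemxAr scalerA -expr2 exprVn sqr_sqrtr ?ltW.
by exists (u :: us); rewrite big_cons -def_us uuT /deflate addrC subrK.
Qed.

Lemma frob_gram S u : frob S (u *m u^T) = qform S u u.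
Proof. by rewrite /frob mulmxA mxtrace_mulC trace_mx11 mulmxA; exact: qform_tr. Qed.

Lemma psd_frob_ge0 S X : psd S -> psd X -> 0 <= frob S X.
Proof.
move=> pS /psd_gram[us ->]; rewrite /frob mulmx_sumr raddf_sum /=.
by apply: sumr_ge0 => u _; have := frob_gram S u; rewrite /frob => ->; exact: pS.2.
Qed.

End PsdGram.

Section RankDeficient.
Variables (R : rcfType) (r q : nat).

Lemma frob_gram_eq0 (S : 'M[R]_r) (Y : 'M[R]_(r, q)) :
  S *m Y = 0 -> frob S (Y *m Y^T) = 0.
Proof.
by move=> SY0; rewrite /frob mulmxA mxtrace_mulC mulmxA -trmx_mul SY0 trmx0 mul0mx mxtrace0.
Qed.

Lemma row_gram_gt0 (z : 'rV[R]_q) : z != 0 -> 0 < (z *m z^T) 0 0.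
Proof.
move=> z_neq0; have sq_ge0 t : 0 <= z 0 t * z^T t 0 by rewrite mxE -expr2 sqr_ge0.
rewrite mxE lt_def sumr_ge0 // andbT psumr_neq0 //; apply: contraNT z_neq0.
move=> /hasPn z0; apply/eqP/rowP => t; rewrite mxE; apply/eqP.
by have := z0 t (mem_index_enum t); rewrite lt_def sq_ge0 andbT negbK mxE -expr2 sqrf_eq0.
Qed.

Lemma rank_deficient_psd (S : 'M[R]_r) (Y : 'M[R]_(r, q)) :
  S^T = S -> (\rank Y < q)%N ->
  (forall U : 'M[R]_(r, q), U *m Y^T = 0 -> 0 <= frob S (U *m U^T)) -> psd S.
Proof.
move=> symS rankY second_order; split => // v.
have [z zY0 z_neq0] : exists2 z : 'rV[R]_q, z *m Y^T = 0 & z != 0.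
  have : kermx Y^T != 0 by rewrite -mxrank_eq0 mxrank_ker mxrank_tr -lt0n subn_gt0.
  by case/rowV0Pn => z /sub_kermxP; exists z.
have := second_order (v *m z); rewrite -mulmxA zY0 mulmx0 => /(_ erefl).
rewrite trmx_mul mulmxA -(mulmxA v) [z *m _]mx11_scalar mul_mx_scalar -scalemxAl.
by rewrite /frob -scalemxAr mxtraceZ -/(frob S _) frob_gram pmulr_rge0 ?row_gram_gt0.
Qed.

End RankDeficient.

Lemma dotv0l (R : rcfType) (d : nat) (x : 'rV[R]_d) : dotv 0 x = 0.
Proof. by rewrite /dotv big1 // => t _; rewrite mxE mul0r. Qed.

Section Duality.
Variables (R : rcfType) (l : nat) (n : 'I_l -> nat) (d m k : nat) (p : 'I_l -> nat).
Variables (A : 'I_m -> forall j : 'I_l, 'M[R]_(n j)) (a0 : 'I_m -> 'rV[R]_d)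
  (C : forall j : 'I_l, 'M[R]_(n j)) (c : 'rV[R]_d) (b : 'I_m -> R).
Implicit Types (lam : 'I_m -> R) (x : 'rV[R]_d) (Y : forall j : 'I_l, 'M[R]_(n j, p j))
  (X Xb : forall j : 'I_l, 'M[R]_(n j)).

Lemma frob_Slam lam j (X : 'M[R]_(n j)) :
  frob (Slam A C lam j) X = frob (C j) X - \sum_i lam i * frob (A i j) X.
Proof.
rewrite /frob /Slam linearB /= mulmxBl linearB /=; congr (_ - _).
rewrite linear_sum /= mulmx_suml linear_sum /=; apply: eq_bigr => i _.
by rewrite linearZ /= -scalemxAl linearZ.
Qed.

Lemma dotv_slam lam x :
  dotv (slam a0 c lam) x = dotv c x - \sum_i lam i * dotv (a0 i) x.
Proof.
rewrite /dotv /slam; under [X in _ = _ - X]eq_bigr do rewrite mulr_sumr.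
rewrite exchange_big -sumrB; apply: eq_bigr => t _.
rewrite !mxE summxE mulrBl mulr_suml; congr (_ - _).
by apply: eq_bigr => i _; rewrite mxE mulrA.
Qed.

Lemma obj_lagrangian lam X x :
  obj C c X x = \sum_j frob (Slam A C lam j) (X j) + dotv (slam a0 c lam) x
                + \sum_i lam i * opA A a0 X x i.
Proof.
rewrite dotv_slam /obj /opA.
under [in RHS]eq_bigr do rewrite frob_Slam.
under [X in _ = _ + X]eq_bigr do rewrite mulrDr mulr_sumr.
rewrite sumrB big_split /= exchange_big /=; lra.
Qed.

Lemma dual_le_obj lam X x :
  (forall j, psd (Slam A C lam j)) -> slam a0 c lam = 0 -> feas A a0 b X x ->
  \sum_i lam i * b i <= obj C c X x.
Proof.
move=> Spsd s0 [Xpsd AXb]; rewrite (obj_lagrangian lam) s0 dotv0l addr0.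
under [X in _ <= _ + X]eq_bigr do rewrite AXb.
by rewrite lerDr; apply: sumr_ge0 => j _; exact: psd_frob_ge0.
Qed.

Lemma crit1_obj lam Y Xb x : crit1 k A a0 C c b Y Xb x lam ->
  obj C c (qfull k Y Xb) x = \sum_i lam i * b i.
Proof.
case=> [[_ AXb] _ slack s0 SY0]; rewrite (obj_lagrangian lam) s0 dotv0l addr0.
under [X in _ + X = _]eq_bigr do rewrite AXb.
rewrite -[RHS]add0r; congr (_ + _).
rewrite (bigID (fun j : 'I_l => (j < k)%N)) /= big1 => [|j jk]; last first.
  by rewrite /qfull jk frob_gram_eq0 ?SY0.
rewrite add0r -[RHS]slack; apply: eq_big => [j | j]; first by rewrite -leqNgt.
by move=> /negbTE jk; rewrite /qfull jk.
Qed.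

Lemma crit1_global_min lam Y Xb x : crit1 k A a0 C c b Y Xb x lam ->
  (forall j : 'I_l, (j < k)%N -> psd (Slam A C lam j)) ->
  bm_global_min k A a0 C c b Y Xb x.
Proof.
move=> crit Spsd_lt; case: (crit) => feasY Spsd_ge _ s0 _.
have Spsd j : psd (Slam A C lam j) by case: (ltnP j k) => [/Spsd_lt | /Spsd_ge].
split=> // Y' Xb' x' feasY'; rewrite (crit1_obj crit).
exact: dual_le_obj.
Qed.

Hypothesis symA : forall i j, (A i j)^T = A i j.
Hypothesis symC : forall j, (C j)^T = C j.

Lemma Slam_sym lam j : (Slam A C lam j)^T = Slam A C lam j.
Proof.
rewrite /Slam linearB /= symC linear_sum /=; congr (_ - _).
by apply: eq_bigr => i _; rewrite linearZ /= symA.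
Qed.

Lemma crit2_psd lam Y Xb x : crit2 k A a0 C c b Y Xb x lam ->
  (forall j : 'I_l, (j < k)%N -> (\rank (Y j) < p j)%N) ->
  forall j : 'I_l, (j < k)%N -> psd (Slam A C lam j).
Proof.
case=> _ second_order rankY j jk; apply: rank_deficient_psd (rankY j jk) _ => [|U UY0].
  exact: Slam_sym.
by apply: second_order => // i; rewrite /Aj UY0 /frob mulmx0 mxtrace0.
Qed.

End Duality.

Theorem lemma13 (R : rcfType) (l : nat) (n : 'I_l -> nat) (d m k : nat)
  (p : 'I_l -> nat)
  (A : 'I_m -> forall j : 'I_l, 'M[R]_(n j)) (a0 : 'I_m -> 'rV[R]_d)
  (C : forall j : 'I_l, 'M[R]_(n j)) (c : 'rV[R]_d) (b : 'I_m -> R) :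
  (1 <= k <= l)%N ->
  (forall j : 'I_l, (j < k)%N -> (0 < p j)%N) ->
  (forall i j, (A i j)^T = A i j) ->
  (forall j, (C j)^T = C j) ->
  (* 𝒳 nonempty and min_{X ∈ 𝒳} <C,X> attained *)
  (exists (X : forall j : 'I_l, 'M[R]_(n j)) (x : 'rV[R]_d),
      feas A a0 b X x /\
      forall (X' : forall j : 'I_l, 'M[R]_(n j)) (x' : 'rV[R]_d),
        feas A a0 b X' x' -> obj C c X x <= obj C c X' x') ->
  forall (Y : forall j : 'I_l, 'M[R]_(n j, p j))
         (Xb : forall j : 'I_l, 'M[R]_(n j)) (x : 'rV[R]_d),
    (exists lam : 'I_m -> R,
        crit1 k A a0 C c b Y Xb x lam /\
        forall j : 'I_l, (j < k)%N -> psd (Slam A C lam j))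
    \/
    ((exists lam : 'I_m -> R, crit2 k A a0 C c b Y Xb x lam) /\
     forall j : 'I_l, (j < k)%N -> (\rank (Y j) < p j)%N) ->
    bm_global_min k A a0 C c b Y Xb x.
Proof.
move=> _ _ symA symC _ Y Xb x [[lam [crit Spsd]] | [[lam crit] rankY]].
  exact: crit1_global_min crit Spsd.
exact: crit1_global_min crit.1 (crit2_psd symA symC crit rankY).
Qed.
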